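(* Let $C$ be a set of colors and $W\subseteq C^\omega$ any winning condition. For any positive integers $n,q$, any $n$-node arena $\mathcal{A}$ over $C$, and any $q$-state strategy $S_1$ of Player 0 in $\mathcal{A}$, there exists a chromatic $(q+1)^n$-state strategy $S_2$ of Player 0 in $\mathcal{A}$ such that for every node $v$ of $\mathcal{A}$: if $S_1$ is winning from $v$ w.r.t. $W$, then so is $S_2$.
   Context: An arena over a set of colors $C$ is a tuple $\mathcal{A} = \langle V, V_0, V_1, E\rangle$ of finite sets with $V = V_0 \sqcup V_1$, $E \subseteq V \times C \times V$, and every node having at least one outgoing edge; for $e=(s,c,t)$ write $\mathsf{source}(e)=s$, $\mathsf{col}(e)=c$, $\mathsf{target}(e)=t$. A path is a nonempty finite or infinite sequence of edges $e_1e_2\ldots$ with $\mathsf{target}(e_i)=\mathsf{source}(e_{i+1})$; for each node $v$ there is also a $0$-length path $\lambda_v$ with source and target $v$. $\mathsf{col}$ extends letterwise to sequences of edges. A strategy of Player 0 is a function $S$ assigning to each finite path $p$ with $\mathsf{target}(p)\in V_0$ an edge $S(p)$ with $\mathsf{source}(S(p))=\mathsf{target}(p)$. A path $p=e_1e_2\ldots$ is consistent with $S$ if (when $\mathsf{source}(p)\in V_0$) $e_1=S(\lambda_{\mathsf{source}(p)})$ and for each $1\le i<|p|$ with $\mathsf{target}(e_i)\in V_0$ we have $e_{i+1}=S(e_1\ldots e_i)$. For $v\in V$, $\mathsf{col}(S,v)\subseteq C^\omega$ is the set of $\mathsf{col}(p)$ over all infinite paths $p$ from $v$ consistent with $S$.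 $S$ is winning from $v$ w.r.t. $W$ if $\mathsf{col}(S,v)\subseteq W$. A memory structure is $\mathcal{M}=\langle M, m_{init},\delta\rangle$ with $M$ finite, $m_{init}\in M$, $\delta: M\times E\to M$ (extended to finite edge sequences in the usual way). $S$ is an $\mathcal{M}$-strategy if for all finite paths $p_1,p_2$ with $\mathsf{target}(p_1)=\mathsf{target}(p_2)\in V_0$, $\delta(m_{init},p_1)=\delta(m_{init},p_2)$ implies $S(p_1)=S(p_2)$. $\mathcal{M}$ is chromatic if there is $\sigma: M\times C\to M$ with $\delta(m,e)=\sigma(m,\mathsf{col}(e))$ for all $m,e$. A (chromatic) $q$-state strategy is an $\mathcal{M}$-strategy for some (chromatic) memory structure $\mathcal{M}$ with $|M|=q$. *)

From mathcomp Require Import all_boot.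
Set Implicit Arguments. Unset Strict Implicit. Unset Printing Implicit Defensive.

(* An arena over colors C: finite node set V, Player-0 nodes V0 (V1 = ~: V0),
   a finite set of edges given as a finite type with source/color/target maps;
   injectivity of (source, col, target) makes E a genuine subset of V x C x V. *)
Record arena (C : Type) := Arena {
  node : finType;
  V0 : {set node};
  edge : finType;
  source : edge -> node;
  col : edge -> C;
  target : edge -> node;
  edge_inj : injective (fun e => (source e, col e, target e));
  out_edge : forall v : node, exists e : edge, source e = v
}.

Section Games.
Variables (C : Type) (A : arena C).
Notation V := (node A).
Notation E := (edge A).

(* A finite path is represented by its start node v and its edge list s
   (s = [::] is the 0-length path lambda_v). *)
Definition is_fpath (v : V) (s : seq E) : bool :=
  match s with
  | [::] => true
  | e :: s' => (source e == v) && path (fun a b => target a == source b) e s'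
  end.

Definition ptarget (v : V) (s : seq E) : V := last v (map (@target _ A) s).

(* A strategy of Player 0: a function on finite paths; it must give an edge
   out of the target for every finite path whose target is in V0. Values on
   non-paths are irrelevant. *)
Definition strategy := V -> seq E -> E.

Definition is_strategy (S : strategy) : Prop :=
  forall v s, is_fpath v s -> ptarget v s \in V0 A -> source (S v s) = ptarget v s.

Definition consistent_inf (S : strategy) (v : V) (p : nat -> E) : Prop :=
  source (p 0) = v /\
  (forall i, target (p i) = source (p i.+1)) /\
  (v \in V0 A -> p 0 = S v [::]) /\
  (forall i, target (p i) \in V0 A -> p i.+1 = S v (mkseq p i.+1)).

Definition col_set (S : strategy) (v : V) (w : nat -> C) : Prop :=
  exists p, consistent_inf S v p /\ w = (fun i => col (p i)).

Definition winning_from (S : strategy) (v : V) (W : (nat -> C) -> Prop) : Prop :=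
  forall w, col_set S v w -> W w.

Record memory := Memory {
  mstate : finType;
  m_init : mstate;
  delta : mstate -> E -> mstate
}.

Definition delta_seq (M : memory) (m : mstate M) (s : seq E) : mstate M :=
  foldl (@delta M) m s.

Definition is_M_strategy (M : memory) (S : strategy) : Prop :=
  forall v1 s1 v2 s2, is_fpath v1 s1 -> is_fpath v2 s2 ->
    ptarget v1 s1 = ptarget v2 s2 -> ptarget v1 s1 \in V0 A ->
    delta_seq (m_init M) s1 = delta_seq (m_init M) s2 ->
    S v1 s1 = S v2 s2.

Definition chromatic (M : memory) : Prop :=
  exists sigma : mstate M -> C -> mstate M,
    forall m e, delta m e = sigma m (col e).

Definition q_state_strategy (q : nat) (S : strategy) : Prop :=
  is_strategy S /\ exists M : memory, #|mstate M| = q /\ is_M_strategy M S.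

Definition chromatic_q_state_strategy (q : nat) (S : strategy) : Prop :=
  is_strategy S /\
  exists M : memory, #|mstate M| = q /\ chromatic M /\ is_M_strategy M S.

End Games.

From mathcomp Require Import all_boot.
From Stdlib Require Import Classical ClassicalEpsilon FunctionalExtensionality.
Set Implicit Arguments. Unset Strict Implicit. Unset Printing Implicit Defensive.

(* The new memory state maps every node u either to None or to the S1-memory
   state of an S1-consistent play that starts at a node won by S1, ends in u
   and produced the colours read so far. It is updated colour by colour, by
   extending for each u one such tracked play with an admissible edge into u,
   so the memory is chromatic and has (q+1)^n states; at u the new strategy
   plays what S1 plays in the tracked memory state. Along a play of the new
   strategy the current node is always tracked, and the extension steps form
   a finitely branching tree of tracked plays with nodes at every depth. By
   Koenig's lemma it has an infinite branch: an S1-consistent play from a node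
   won by S1 with the same colour sequence, which therefore lies in W. *)

Lemma decreasing_sets_meet (T : finType) (X : nat -> {set T}) :
  (forall d, X d.+1 \subset X d) -> (forall d, X d != set0) ->
  exists x, forall d, x \in X d.
Proof.
move=> X_dec X_n0; apply: NNPP => no_common.
(* Beyond the last index at which some point leaves the sets, they are empty. *)
have escape x : exists d, x \notin X d.
  apply: NNPP => /(not_ex_all_not _ _) in_all; apply: no_common.
  by exists x => d; apply/negPn/negP; exact: in_all.
have X_anti : {homo X : i j / i <= j >-> j \subset i}.
  apply: (homo_leq (r := fun B B' => B' \subset B)) => // B' B B'' BB' B'B''.
  exact: subset_trans B'B'' BB'.
have /set0Pn [x xX] := X_n0 (\max_y xchoose (escape y)).
have /negP := xchooseP (escape x); apply.
exact: subsetP (X_anti _ _ (leq_bigmax x)) _ xX.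
Qed.

Lemma dependent_choice (T : Type) (P : nat -> T -> Prop)
    (R : nat -> T -> T -> Prop) (x0 : T) :
  P 0 x0 -> (forall k x, P k x -> exists y, P k.+1 y /\ R k x y) ->
  exists g : nat -> T, forall k, P k (g k) /\ R k (g k) (g k.+1).
Proof.
move=> P0 step.
have [next nextP] : exists next : nat * T -> T, forall kx,
    P kx.1 kx.2 -> P kx.1.+1 (next kx) /\ R kx.1 kx.2 (next kx).
  apply: (choice (fun (kx : nat * T) y =>
    P kx.1 kx.2 -> P kx.1.+1 y /\ R kx.1 kx.2 y)) => [[k x]] /=.
  have [Pkx|] := classic (P k x); last by exists x.
  by have [y yP] := step k x Pkx; exists y.
pose fix g k := if k is k'.+1 then next (k', g k') else x0.
have Pg k : P k (g k) by elim: k => //= k /(nextP (k, _)) [].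
by exists g => k; split; [exact: Pg | exact: (nextP (k, g k) (Pg k)).2].
Qed.

Section Koenig.
Variables (T : finType) (L : nat -> {set T}) (up : nat -> T -> T).
Hypothesis L_n0 : forall k, L k != set0.
Hypothesis up_L : forall k x, x \in L k.+1 -> up k x \in L k.

Fixpoint ancestor (k d : nat) (x : T) : T :=
  if d is d'.+1 then up k (ancestor k.+1 d' x) else x.

Lemma ancestorSr k d x : ancestor k d.+1 x = ancestor k d (up (k + d) x).
Proof.
elim: d k => [|d IHd] k /=; first by rewrite addn0.
by rewrite -addSnnS -IHd.
Qed.

Definition shadow (k d : nat) : {set T} := ancestor k d @: L (k + d).

Lemma shadowS k d : shadow k d.+1 \subset shadow k d.
Proof.
apply/subsetP => _ /imsetP [x xL ->]; rewrite ancestorSr imset_f //.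
by apply: up_L; rewrite -addnS.
Qed.

Lemma shadow_n0 k d : shadow k d != set0.
Proof. by rewrite imset_eq0. Qed.

Definition immortal (k : nat) (x : T) : Prop := forall d, x \in shadow k d.

Lemma immortal_L k x : immortal k x -> x \in L k.
Proof. by move=> /(_ 0) /imsetP [y]; rewrite addn0 => yL ->. Qed.

Lemma immortal_root : exists x, immortal 0 x.
Proof. exact: decreasing_sets_meet (shadowS 0) (shadow_n0 0). Qed.

Lemma immortal_child k x :
  immortal k x -> exists y, immortal k.+1 y /\ up k y = x.
Proof.
move=> x_imm.
have [y y_in] : exists y, forall d, y \in [set y in shadow k.+1 d | up k y == x].
  apply: decreasing_sets_meet => d.
    by apply/subsetP => y; rewrite !inE => /andP [/(subsetP (shadowS _ _)) -> ->].
  have /imsetP [z zL ->] := x_imm d.+1.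
  apply/set0Pn; exists (ancestor k.+1 d z).
  by rewrite inE eqxx andbT imset_f // addSnnS.
exists y; split; first by move=> d; have := y_in d; rewrite inE => /andP [].
by have := y_in 0; rewrite inE => /andP [_ /eqP].
Qed.

Lemma koenig_branch :
  exists g : nat -> T, forall k, g k \in L k /\ up k (g k.+1) = g k.
Proof.
have [x0 x0_imm] := immortal_root.
have [g gP] := dependent_choice (R := fun k x y => up k y = x) x0_imm
  (fun k x x_imm => immortal_child x_imm).
by exists g => k; have [/immortal_L gL ->] := gP k.
Qed.

End Koenig.

Section Plays.
Variables (C : Type) (A : arena C).

Lemma ptarget_rcons (v : node A) s e : ptarget v (rcons s e) = target e.
Proof. by rewrite /ptarget map_rcons last_rcons. Qed.

Lemma is_fpath_rcons (v : node A) s e :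
  is_fpath v (rcons s e) = is_fpath v s && (source e == ptarget v s).
Proof.
case: s => [|x s] /=; first by rewrite andbT.
by rewrite rcons_path /ptarget /= last_map andbA [source e == _]eq_sym.
Qed.

Lemma delta_seq_rcons (M : memory A) (m : mstate M) s e :
  delta_seq m (rcons s e) = delta (delta_seq m s) e.
Proof. exact: foldl_rcons. Qed.

Lemma mkseq_fpath (v : node A) (p : nat -> edge A) :
  source (p 0) = v -> (forall i, target (p i) = source (p i.+1)) ->
  forall k, is_fpath v (mkseq p k) /\ ptarget v (mkseq p k) = source (p k).
Proof.
move=> p0 p_step; elim=> [|k [p_path p_end]]; first by rewrite /ptarget.
by rewrite mkseqS is_fpath_rcons ptarget_rcons p_path p_end eqxx.
Qed.

Lemma consistent_infE (S : strategy A) v p : consistent_inf S v p ->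
  forall k, source (p k) \in V0 A -> p k = S v (mkseq p k).
Proof.
move=> [p0 [p_step [p0_move p_move]]] [|k]; first by rewrite p0; exact: p0_move.
by rewrite -p_step; exact: p_move.
Qed.

Lemma consistent_infP (S : strategy A) v p :
  source (p 0) = v -> (forall i, target (p i) = source (p i.+1)) ->
  (forall k, source (p k) \in V0 A -> p k = S v (mkseq p k)) ->
  consistent_inf S v p.
Proof.
move=> p0 p_step p_move; do 3?split => //.
  by rewrite -{1}p0; exact: p_move 0.
by move=> i; rewrite p_step; exact: p_move.
Qed.

End Plays.

Section Tracker.
Variables (C : Type) (W : (nat -> C) -> Prop) (A : arena C) (S1 : strategy A)
  (M : memory A).
Hypothesis S1_strategy : is_strategy S1.
Hypothesis S1_M : is_M_strategy M S1.

Notation V := (node A).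
Notation E := (edge A).

Definition some_out_edge (u : V) : E :=
  proj1_sig (constructive_indefinite_description _ (out_edge u)).

Lemma some_out_edgeP u : source (some_out_edge u) = u.
Proof. exact: proj2_sig (constructive_indefinite_description _ (out_edge u)). Qed.

Definition reaches (m : mstate M) (u : V) : Prop :=
  exists vs : V * seq E,
    [/\ is_fpath vs.1 vs.2, ptarget vs.1 vs.2 = u & delta_seq (m_init M) vs.2 = m].

(* Independent of the chosen path, since S1 is an M-strategy. *)
Definition memory_move (m : mstate M) (u : V) : E :=
  if excluded_middle_informative (reaches m u) is left r then
    let vs := proj1_sig (constructive_indefinite_description _ r) in S1 vs.1 vs.2
  else some_out_edge u.

Lemma memory_move_source m u : u \in V0 A -> source (memory_move m u) = u.
Proof.
rewrite /memory_move; case: excluded_middle_informative => [r|_ _]; last first.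
  exact: some_out_edgeP.
case: (constructive_indefinite_description _ r) => [[w s] /= [s_path <- _]].
exact: S1_strategy.
Qed.

Lemma memory_moveE v s : is_fpath v s -> ptarget v s \in V0 A ->
  memory_move (delta_seq (m_init M) s) (ptarget v s) = S1 v s.
Proof.
move=> s_path s_V0; rewrite /memory_move.
case: excluded_middle_informative => [r|]; last by case; exists (v, s).
case: (constructive_indefinite_description _ r) => [[w t] /= [t_path t_end t_mem]].
by apply: S1_M; rewrite ?t_end.
Qed.

Definition tracker := {ffun V -> option (mstate M)}.

Definition tracker_init : tracker := [ffun u =>
  if excluded_middle_informative (winning_from S1 u W) then Some (m_init M)
  else None].

(* The colours carry no decidable equality. *)
Definition has_col (e : E) (c : C) : bool :=
  if excluded_middle_informative (col e = c) then true else false.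

Lemma has_colP e c : reflect (col e = c) (has_col e c).
Proof. by rewrite /has_col; case: excluded_middle_informative; constructor. Qed.

Definition admissible (f : tracker) (e : E) : bool :=
  if f (source e) is Some m then
    (source e \notin V0 A) || (e == memory_move m (source e))
  else false.

Definition admissible_into (f : tracker) (c : C) (u : V) : option E :=
  [pick e | [&& target e == u, admissible f e & has_col e c]].

Definition tracker_step (f : tracker) (c : C) : tracker := [ffun u =>
  if admissible_into f c u is Some e then omap (fun m => delta m e) (f (source e))
  else None].

Definition tracker_memory : memory A :=
  {| mstate := tracker; m_init := tracker_init;
     delta := fun f e => tracker_step f (col e) |}.

Definition tracker_after (s : seq E) : tracker :=
  delta_seq (m_init tracker_memory) s.

Definition tracker_strategy : strategy A := fun v s =>
  let u := ptarget v s in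
  if tracker_after s u is Some m then memory_move m u else some_out_edge u.

Lemma tracker_strategyP : is_strategy tracker_strategy.
Proof.
move=> v s _ u_V0; rewrite /tracker_strategy.
by case: (tracker_after s _) => [m|]; [exact: memory_move_source | exact: some_out_edgeP].
Qed.

Lemma tracker_strategy_memory : is_M_strategy tracker_memory tracker_strategy.
Proof.
move=> v1 s1 v2 s2 _ _ same_end _ same_mem.
by rewrite /tracker_strategy /tracker_after same_end same_mem.
Qed.

Lemma tracker_memory_chromatic : chromatic tracker_memory.
Proof. by exists tracker_step. Qed.

Lemma card_tracker : #|mstate tracker_memory| = #|mstate M|.+1 ^ #|V|.
Proof. by rewrite card_ffun card_option. Qed.

Lemma admissible_intoP f c u e : admissible_into f c u = Some e ->
  [/\ target e = u, admissible f e & col e = c].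
Proof.
rewrite /admissible_into; case: pickP => // e' /and3P [/eqP <- e'_adm /has_colP].
by move=> <- [<-].
Qed.

Lemma tracker_step_target f e : admissible f e ->
  tracker_step f (col e) (target e) != None.
Proof.
move=> e_adm; rewrite ffunE /admissible_into; case: pickP => [e' /and3P [_ + _]|].
  by rewrite /admissible; case: (f (source e')).
by move/(_ e); rewrite eqxx e_adm; move/negbT/negP; case; apply/has_colP.
Qed.

Section Play.
Variables (v : V) (p : nat -> E).
Hypothesis v_win : winning_from S1 v W.
Hypothesis p_consistent : consistent_inf tracker_strategy v p.

Definition tracker_at (k : nat) : tracker := tracker_after (mkseq p k).

Lemma tracker_atS k : tracker_at k.+1 = tracker_step (tracker_at k) (col (p k)).
Proof. by rewrite /tracker_at /tracker_after mkseqS delta_seq_rcons. Qed.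

Lemma play_tracked k : tracker_at k (source (p k)) != None.
Proof.
have [p0 [p_step _]] := p_consistent.
elim: k => [|k IHk].
  by rewrite /tracker_at /= p0 ffunE; case: excluded_middle_informative => // /(_ v_win).
rewrite -p_step tracker_atS; apply: tracker_step_target.
move: IHk; rewrite /admissible; case mem_k: (tracker_at k _) => [m|] // _.
case: (boolP (source (p k) \in V0 A)) => //= pk_V0.
rewrite {1}(consistent_infE p_consistent pk_V0) /tracker_strategy.
by rewrite (mkseq_fpath p0 p_step k).2 -/(tracker_at k) mem_k.
Qed.

Definition tracked (k : nat) : {set V} := [set u | tracker_at k u != None].

Definition parent (k : nat) (u : V) : V :=
  if admissible_into (tracker_at k) (col (p k)) u is Some e then source e else u.

Lemma tracked_n0 k : tracked k != set0.
Proof. by apply/set0Pn; exists (source (p k)); rewrite inE play_tracked. Qed.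

Lemma parent_tracked k u : u \in tracked k.+1 -> parent k u \in tracked k.
Proof.
rewrite !inE tracker_atS ffunE /parent.
by case: admissible_into => // e; case: (tracker_at k (source e)).
Qed.

Section Branch.
Variable g : nat -> V.
Hypothesis g_tracked : forall k, g k \in tracked k.
Hypothesis g_parent : forall k, parent k (g k.+1) = g k.

Definition branch_edge (k : nat) : E :=
  if admissible_into (tracker_at k) (col (p k)) (g k.+1) is Some e then e
  else p k.

Lemma branch_edgeP k :
  [/\ source (branch_edge k) = g k, target (branch_edge k) = g k.+1,
      admissible (tracker_at k) (branch_edge k), col (branch_edge k) = col (p k)
    & tracker_at k.+1 (g k.+1)
        = omap (fun m => delta m (branch_edge k)) (tracker_at k (g k))].
Proof.
have := g_tracked k.+1; have := g_parent k.
rewrite inE tracker_atS ffunE /parent /branch_edge.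
case into_g: admissible_into => [e|] // <- _.
by have [] := admissible_intoP into_g.
Qed.

Lemma branch_root :
  winning_from S1 (g 0) W /\ tracker_at 0 (g 0) = Some (m_init M).
Proof.
have := g_tracked 0; rewrite inE /tracker_at /= ffunE.
by case: excluded_middle_informative.
Qed.

Lemma branch_memory k :
  tracker_at k (g k) = Some (delta_seq (m_init M) (mkseq branch_edge k)).
Proof.
elim: k => [|k IHk]; first exact: branch_root.2.
by have [_ _ _ _ ->] := branch_edgeP k; rewrite IHk mkseqS delta_seq_rcons.
Qed.

Lemma branch_consistent : consistent_inf S1 (g 0) branch_edge.
Proof.
have q0 : source (branch_edge 0) = g 0 by have [] := branch_edgeP 0.
have q_step i : target (branch_edge i) = source (branch_edge i.+1).
  by have [_ -> _ _ _] := branch_edgeP i; have [-> _ _ _ _] := branch_edgeP i.+1.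
apply: consistent_infP => // k; have [src _ adm _ _] := branch_edgeP k.
rewrite src => gk_V0; move: adm; rewrite /admissible src branch_memory gk_V0.
move=> /eqP ->; have [q_path q_end] := mkseq_fpath q0 q_step k.
by rewrite src in q_end; rewrite -q_end memory_moveE // q_end.
Qed.

End Branch.

Lemma play_winning : W (fun i => col (p i)).
Proof.
have [g /all_and2 [g_tracked g_parent]] := koenig_branch tracked_n0 parent_tracked.
apply: (branch_root g_tracked).1; exists (branch_edge g); split.
  exact: branch_consistent.
apply: functional_extensionality => i.
by have [_ _ _ -> _] := branch_edgeP g_tracked g_parent i.
Qed.

End Play.

Lemma tracker_strategy_winning v :
  winning_from S1 v W -> winning_from tracker_strategy v W.
Proof.
by move=> v_win w [p [p_consistent ->]]; exact: play_winning v_win p_consistent.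
Qed.

End Tracker.

Theorem corollary1 (C : Type) (W : (nat -> C) -> Prop) (n q : nat)
  (A : arena C) (S1 : strategy A) :
  0 < n -> 0 < q -> #|node A| = n ->
  q_state_strategy q S1 ->
  exists S2 : strategy A,
    chromatic_q_state_strategy (q.+1 ^ n) S2 /\
    forall v : node A, winning_from S1 v W -> winning_from S2 v W.
Proof.
move=> _ _ card_A [S1_strategy [M [card_M S1_M]]].
exists (tracker_strategy W S1 M); split; last exact: tracker_strategy_winning.
split; first exact: tracker_strategyP.
exists (tracker_memory W S1 M); rewrite card_tracker card_M card_A.
by split=> //; split; [exact: tracker_memory_chromatic | exact: tracker_strategy_memory].
Qed.
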